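(* Let $\Sigma\mathbb{N}$ be the natural numbers with the Scott topology of the usual order and $\Sigma 2$ the Sierpiński space (the chain $0<1$ with its Scott topology). Both are $S^{\ast}$-well-filtered, but the product space $\Sigma\mathbb{N}\times\Sigma 2$ is not $S^{\ast}$-well-filtered. Consequently, the full subcategory of $\mathbf{Top}_0$ consisting of all $S^{\ast}$-well-filtered spaces and continuous maps is not a reflective subcategory of $\mathbf{Top}_0$.
   Context: $\mathbf{Top}_0$ is the category of $T_0$-spaces and continuous maps; a full subcategory is reflective if its inclusion functor has a left adjoint. For a space $X$, ${\uparrow}$ is taken in the specialization order ($x\le y$ iff $x\in cl\{y\}$); $K(X)$ is the set of nonempty compact saturated (= upper) subsets; a family in $K(X)$ is filtered if any two members contain a common member. $X$ is $S^{\ast}$-well-filtered if for every filtered family $\{K_i\mid i\in I\}\subseteq K(X)$, every $G\in K(X)$ and every nonempty open $U$, $\bigcap_{i}K_i\cap G\subseteq U$ implies $K_i\cap G\subseteq U$ for some $i$. *)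

From HB Require Import structures.
From mathcomp Require Import all_boot all_order.
From mathcomp Require Import all_classical all_reals all_analysis.
Set Implicit Arguments. Unset Strict Implicit. Unset Printing Implicit Defensive.
Import Order.TTheory.
Local Open Scope classical_set_scope.
Local Open Scope order_scope.

Section ScottDef.
Context {d : Order.disp_t} {T : porderType d}.

Definition directed_set (D : set T) :=
  D !=set0 /\ forall x y, D x -> D y -> exists2 z, D z & x <= z /\ y <= z.

Definition is_sup (D : set T) (s : T) :=
  (forall x, D x -> x <= s) /\ (forall u, (forall x, D x -> x <= u) -> s <= u).

Definition scott_open (U : set T) :=
  (forall x y, x <= y -> U x -> U y) /\
  (forall D s, directed_set D -> is_sup D s -> U s -> D `&` U !=set0).

Lemma scott_openT : scott_open setT.
Proof.
split=> // D s [[x Dx] _] _ _; by exists x.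
Qed.

Lemma scott_openI : setI_closed scott_open.
Proof.
move=> U V [uU sU] [uV sV]; split.
  by move=> x y xy [Ux Vx]; split; [exact: uU Ux|exact: uV Vx].
move=> D s dD supD [Us Vs].
have [x [Dx Ux]] := sU D s dD supD Us.
have [y [Dy Vy]] := sV D s dD supD Vs.
have [z Dz [xz yz]] := dD.2 x y Dx Dy.
by exists z; split=> //; split; [exact: uU Ux|exact: uV Vy].
Qed.

Lemma scott_open_bigU (I : Type) (f : I -> set T) :
  (forall i, scott_open (f i)) -> scott_open (\bigcup_i f i).
Proof.
move=> fo; split.
  by move=> x y xy [i _ fxi]; exists i => //; exact: (fo i).1 fxi.
move=> D s dD supD [i _ fis].
have [x [Dx fxi]] := (fo i).2 D s dD supD fis.
by exists x; split=> //; exists i.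
Qed.

End ScottDef.

Definition scott {d : Order.disp_t} (T : porderType d) : Type := T.

HB.instance Definition _ {d : Order.disp_t} (T : porderType d) :=
  Choice.on (scott T).
HB.instance Definition _ {d : Order.disp_t} (T : porderType d) :=
  isOpenTopological.Build (scott T) (@scott_openT d T) (@scott_openI d T)
    (@scott_open_bigU d T).

Definition SigmaN : topologicalType := scott nat.
Definition Sigma2 : topologicalType := scott bool.

Section WF.
Context {X : topologicalType}.

Definition spec_le (x y : X) := closure [set y] x.

Definition saturated (A : set X) := forall x y, spec_le x y -> A x -> A y.

Definition KX (A : set X) := [/\ A !=set0, compact A & saturated A].

Definition filtered_KX (F : set (set X)) :=
  [/\ F !=set0, F `<=` KX &
      forall A B, F A -> F B -> exists2 C, F C & C `<=` A `&` B].

End WF.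

Definition S_star_well_filtered (X : topologicalType) :=
  forall (F : set (set X)), filtered_KX F ->
  forall (G : set X), KX G ->
  forall (U : set X), open U -> U !=set0 ->
    (\bigcap_(K in F) K) `&` G `<=` U -> exists2 K, F K & K `&` G `<=` U.

(* A full subcategory of Top_0, given by a property P of spaces, is reflective
   iff every T0 space X has a reflection: a T0 space Y with P Y and a continuous
   map eta : X -> Y through which every continuous map from X to a T0 space
   satisfying P factors uniquely (universal arrow = unit of a left adjoint). *)
Definition reflective_in_Top0 (P : topologicalType -> Prop) :=
  forall X : topologicalType, kolmogorov_space X ->
  exists (Y : topologicalType) (eta : X -> Y),
    [/\ kolmogorov_space Y, P Y, continuous eta &
        forall (Z : topologicalType) (f : X -> Z),
          kolmogorov_space Z -> P Z -> continuous f ->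
          exists! g : Y -> Z, continuous g /\ g \o eta = f].

From HB Require Import structures.
From mathcomp Require Import all_boot all_order.
From mathcomp Require Import all_classical all_reals all_analysis.
Set Implicit Arguments. Unset Strict Implicit. Unset Printing Implicit Defensive.
Import Order.TTheory.
Local Open Scope classical_set_scope.
Local Open Scope order_scope.

(* In a Scott space the specialization order is the underlying order, so the
   members of K(X) are upper sets. In ΣN, take n <= u maximal such that some
   member K of the family lies above n, where u is a point of the open set U:
   if n = u then K ⊆ U, otherwise every member meets [0, n], hence contains
   ↑n ⊇ K. In Σ2 a member not inside U contains 0, hence is the whole space.
   In ΣN × Σ2 the sets K_n = ↑(0,1) ∪ ↑(n,0) form a filtered family whose
   intersection is the open set ΣN × {1}, which contains no K_n.
   Finally, a reflective subcategory of Top_0 closed under homeomorphisms is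
   closed under binary products: pairing the factorizations of the two
   projections through the reflection of X × Y inverts the unit. *)

Section Specialization.
Context {X : topologicalType}.
Implicit Types (x y z : X) (A : set X).

Definition spec_up x : set X := [set y | spec_le x y].

Lemma spec_leP x y : spec_le x y <-> forall B, nbhs x B -> B y.
Proof. by split=> xy B /xy; [case=> _ [->]|exists y]. Qed.

Lemma spec_le_refl x : spec_le x x.
Proof. exact: subset_closure. Qed.

Lemma open_saturated A : open A -> saturated A.
Proof.
by move=> oA x y /spec_leP xy Ax; apply: xy; apply: open_nbhs_nbhs.
Qed.

Lemma spec_le_trans y x z : spec_le x y -> spec_le y z -> spec_le x z.
Proof.
move=> /spec_leP xy /spec_leP yz; apply/spec_leP => B.
rewrite nbhsE => -[V [oV Vx] VB]; apply: VB.
have Vy : V y by apply: xy; apply: open_nbhs_nbhs.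
by apply: yz; apply: open_nbhs_nbhs.
Qed.

Lemma saturated_spec_up x : saturated (spec_up x).
Proof. by move=> y z yz xy; exact: spec_le_trans yz. Qed.

Lemma compact_spec_up x : compact (spec_up x).
Proof.
move=> F FF Fx; exists x; split; first exact: spec_le_refl.
move=> A B FA xB; have [y [Ay /spec_leP xy]] := filter_ex (filterI FA Fx).
by exists y; split; [|exact: xy].
Qed.

Lemma KX_spec_up x : KX (spec_up x).
Proof.
split; [by exists x; apply: spec_le_refl|exact: compact_spec_up|].
exact: saturated_spec_up.
Qed.

Lemma kolmogorov_specP :
  kolmogorov_space X <-> forall x y, spec_le x y -> spec_le y x -> x = y.
Proof.
split=> [T0 x y /spec_leP xy /spec_leP yx|anti x y].
  apply: contrapT => /eqP /T0 [A [[/set_mem xA /set_mem]|[/set_mem yA /set_mem]]].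
    by apply; exact: xy.
  by apply; exact: yx.
have sep (a b : X) : ~ spec_le a b -> exists2 B, nbhs a B & ~ B b.
  move=> nab; apply: contrapT => nsep; apply/nab/spec_leP => B aB.
  by apply: contrapT => Bb; apply: nsep; exists B.
move=> xNy; have [xy|/sep [B xB Bx]] := pselect (spec_le x y); last first.
  by exists B; left; split; apply: mem_set.
have [yx|/sep [B yB By]] := pselect (spec_le y x).
  by rewrite (anti x y xy yx) eqxx in xNy.
by exists B; right; split; apply: mem_set.
Qed.

End Specialization.

Lemma spec_le_continuous {X Y : topologicalType} (f : X -> Y) x y :
  continuous f -> spec_le x y -> spec_le (f x) (f y).
Proof. by move=> cf /spec_leP xy; apply/spec_leP => B /cf/xy. Qed.

Lemma spec_le_pair {X Y : topologicalType} (p q : X * Y) :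
  spec_le p q <-> spec_le p.1 q.1 /\ spec_le p.2 q.2.
Proof.
split=> [pq|[/spec_leP pq1 /spec_leP pq2]].
  by split; apply: spec_le_continuous pq => r; [exact: cvg_fst|exact: cvg_snd].
by apply/spec_leP => B [[A1 A2] /= [/pq1 Aq1 /pq2 Aq2]]; apply.
Qed.

Lemma kolmogorov_prod {X Y : topologicalType} :
  kolmogorov_space X -> kolmogorov_space Y -> kolmogorov_space (X * Y)%type.
Proof.
move=> /kolmogorov_specP antiX /kolmogorov_specP antiY; apply/kolmogorov_specP.
move=> [x1 x2] [y1 y2] /spec_le_pair [/= xy1 xy2] /spec_le_pair [/= yx1 yx2].
by rewrite (antiX _ _ xy1 yx1) (antiY _ _ xy2 yx2).
Qed.

Definition homeomorphism_invariant (P : topologicalType -> Prop) :=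
  forall (X Y : topologicalType) (e : X -> Y) (h : Y -> X),
  continuous e -> continuous h -> cancel e h -> cancel h e -> P Y -> P X.

Section Homeomorphism.
Variables (X Y : topologicalType) (e : X -> Y) (h : Y -> X).
Hypotheses (ce : continuous e) (ch : continuous h).
Hypotheses (eK : cancel e h) (hK : cancel h e).

Lemma KX_homeo_image (K : set X) : KX K -> KX (e @` K).
Proof.
move=> [[k Kk] cK sK]; split; first by exists (e k), k.
  by apply: continuous_compact => //; exact: continuous_subspaceT.
move=> y1 y2 y12 [x1 Kx1 ex1]; exists (h y2); last exact: hK.
by apply: (sK x1) => //; rewrite -[x1]eK ex1; exact: spec_le_continuous.
Qed.

Lemma filtered_KX_homeo_image (F : set (set X)) :
  filtered_KX F -> filtered_KX [set e @` K | K in F].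
Proof.
move=> [[K0 FK0] FK Ffil]; split; first by exists (e @` K0), K0.
  by move=> _ [K FK' <-]; exact/KX_homeo_image/FK.
move=> _ _ [A FA <-] [B FB <-]; have [C FC CAB] := Ffil A B FA FB.
exists (e @` C); first by exists C.
by move=> _ [c /CAB [Ac Bc] <-]; split; exists c.
Qed.

Lemma S_star_well_filtered_homeo :
  S_star_well_filtered Y -> S_star_well_filtered X.
Proof.
move=> swfY F fF G GK U oU [u Uu] FGU.
have oU' : open (h @^-1` U) by move/continuousP: ch; apply.
have [||K' [K FK <-] KGU] := swfY _ (filtered_KX_homeo_image fF) _
  (KX_homeo_image GK) _ oU'.
- by exists (e u); rewrite /= eK.
- move=> y [FKy [g Gg gy]]; rewrite /= -gy eK; apply: FGU; split=> // K FK.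
  have [k Kk ky] := FKy _ (ex_intro2 _ _ K FK erefl).
  by move: ky; rewrite -gy => /(congr1 h); rewrite !eK => <-.
exists K => // x [Kx Gx].
have /= := KGU (e x) (conj (ex_intro2 _ _ x Kx erefl) (ex_intro2 _ _ x Gx erefl)).
by rewrite eK.
Qed.

End Homeomorphism.

Lemma homeomorphism_invariant_S_star_well_filtered :
  homeomorphism_invariant S_star_well_filtered.
Proof. exact: S_star_well_filtered_homeo. Qed.

Lemma S_star_well_filtered_of_members (X : topologicalType) :
  (forall F : set (set X), filtered_KX F -> forall U, open U -> U !=set0 ->
    exists2 K, F K & K `<=` U \/ K `<=` \bigcap_(K' in F) K') ->
  S_star_well_filtered X.
Proof.
move=> members F fF G _ U oU U0 FGU.
have [K FK [KU|KF]] := members F fF U oU U0; exists K => // x [Kx Gx].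
  exact: KU.
by apply: FGU; split=> //; exact: KF.
Qed.

Section ScottSpecialization.
Context {d : Order.disp_t} {T : porderType d}.

Lemma scott_open_notle (y : T) : scott_open [set x | ~ x <= y].
Proof.
split=> [x z xz xy zy|D s _ [_ sup] sy]; first exact/xy/(le_trans xz).
apply: contrapT => /forallNP Dy; apply/sy/sup => x Dx.
by apply: contrapT => xy; apply: (Dy x).
Qed.

Lemma scott_spec_le (x y : scott T) : spec_le x y <-> (x : T) <= y.
Proof.
split=> [/spec_leP xy|xy].
  apply: contrapT => nxy; have /xy : nbhs x [set z : scott T | ~ (z : T) <= y].
    by apply: open_nbhs_nbhs; split; [exact: scott_open_notle|].
  by apply; exact: lexx.
apply/spec_leP => B; rewrite nbhsE => -[V [oV Vx] VB].
have [upV _] : scott_open (V : set T) := oV.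
exact/VB/(upV x).
Qed.

Lemma scott_saturated (A : set (scott T)) :
  saturated A -> forall x y : T, x <= y -> A x -> A y.
Proof. by move=> sA x y /(scott_spec_le x y); exact: sA. Qed.

Lemma scott_kolmogorov : kolmogorov_space (scott T).
Proof.
apply/kolmogorov_specP => x y /scott_spec_le xy /scott_spec_le yx.
exact: le_anti (introT andP (conj xy yx)).
Qed.

End ScottSpecialization.

Lemma exists_last_nat (P : nat -> Prop) u :
  P 0 -> ~ P u -> exists n, P n /\ ~ P n.+1.
Proof.
elim: u => [//|u IH] P0 nPu.
by have [Pu|/IH] := pselect (P u); [exists u|apply].
Qed.

Lemma S_star_well_filtered_SigmaN : S_star_well_filtered SigmaN.
Proof.
apply: S_star_well_filtered_of_members => F [[K0 FK0] FK _] U oU [u Uu].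
have Kup K : F K -> forall a b : nat, (a <= b)%N -> K a -> K b.
  by move=> /FK [_ _ /scott_saturated Ksat] a b ab; apply: Ksat.
pose P n := exists2 K, F K & forall k, K k -> (n <= k)%N.
have [[K FK' Ku]|nPu] := pselect (P u).
  exists K => //; left => x /Ku ux.
  exact: scott_saturated (open_saturated oU) u x ux Uu.
have [n [[K FK' Kn] nPn1]] : exists n, P n /\ ~ P n.+1.
  by apply: exists_last_nat nPu; exists K0.
exists K => //; right => x Kx K' FK''.
have [c K'c cn] : exists2 c, K' c & (c <= n)%N.
  apply: contrapT => nc; apply: nPn1; exists K' => // c K'c.
  by rewrite ltnNge; apply/negP => cn; apply: nc; exists c.
exact: Kup K' FK'' c x (leq_trans cn (Kn x Kx)) K'c.
Qed.

Lemma S_star_well_filtered_Sigma2 : S_star_well_filtered Sigma2.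
Proof.
apply: S_star_well_filtered_of_members => F [[K0 FK0] FK _] U oU [u Uu].
have Ut : U true.
  by case: u Uu => //; apply: (@scott_saturated _ bool _ (open_saturated oU)).
have [[K FK' KU]|nKU] := pselect (exists2 K, F K & K `<=` U).
  by exists K => //; left.
exists K0 => //; right => x _ K FK'.
have [c Kc cU] : exists2 c, K c & ~ U c.
  apply: contrapT => nc; apply: nKU; exists K => // c Kc.
  by apply: contrapT => cU; apply: nc; exists c.
have [_ _ /scott_saturated Ksat] := FK K FK'.
by apply: (Ksat c) Kc; case: c cU.
Qed.

Lemma open_Sigma2_true : open [set b : Sigma2 | b = true].
Proof.
split=> [x y xy /= x_true|D s _ [_ lub] /= s_true].
  by move: xy; rewrite x_true; case: y.
apply: contrapT => /forallNP noD; move: s_true.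
suff : (s : bool) <= false by case: (s : bool).
by apply: lub => -[] // Dt; case: (noD true).
Qed.

Lemma spec_le_SigmaN_Sigma2 (p q : SigmaN * Sigma2) :
  spec_le p q <-> ((p.1 : nat) <= q.1)%N /\ (p.2 : bool) <= q.2.
Proof.
by rewrite spec_le_pair (scott_spec_le p.1) (scott_spec_le p.2).
Qed.

Definition Kn (n : nat) : set (SigmaN * Sigma2) :=
  spec_up ((0%N : SigmaN), (true : Sigma2)) `|`
  spec_up ((n : SigmaN), (false : Sigma2)).

Lemma KX_Kn n : KX (Kn n).
Proof.
have [[x Kx] cK1 sK1] := KX_spec_up ((0%N : SigmaN), (true : Sigma2)).
have [_ cK2 sK2] := KX_spec_up ((n : SigmaN), (false : Sigma2)).
split; [by exists x; left|exact: compactU|].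
by move=> p q pq [/(sK1 _ _ pq)|/(sK2 _ _ pq)]; [left|right].
Qed.

Lemma Kn_subset m n : (m <= n)%N -> Kn n `<=` Kn m.
Proof.
move=> mn p [p_hi|p_lo]; [by left|right].
by apply: spec_le_trans p_lo; apply/spec_le_SigmaN_Sigma2.
Qed.

Lemma filtered_KX_Kn : filtered_KX (range Kn).
Proof.
split; [by exists (Kn 0), 0%N|by move=> _ [n _ <-]; exact: KX_Kn|].
move=> _ _ [a _ <-] [b _ <-]; exists (Kn (maxn a b)); first by exists (maxn a b).
by move=> p Kp; split; apply: Kn_subset Kp; rewrite ?leq_maxl ?leq_maxr.
Qed.

Lemma not_S_star_well_filtered_SigmaN_Sigma2 :
  ~ S_star_well_filtered (SigmaN * Sigma2)%type.
Proof.
set U := [set p : SigmaN * Sigma2 | (p.2 : bool) = true].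
have oU : open U by apply: open_comp open_Sigma2_true => p _; exact: cvg_snd.
move=> /(_ _ filtered_KX_Kn (Kn 0) (KX_Kn 0) U oU) [].
- by exists ((0%N : SigmaN), (true : Sigma2)).
- move=> [p1 p2] [/(_ (Kn p1.+1) (ex_intro2 _ _ p1.+1 I erefl)) Kp _].
  case: Kp => /spec_le_SigmaN_Sigma2 /= [le1 le2]; last by rewrite ltnn in le1.
  by case: (p2 : bool) le2.
move=> _ [n _ <-] /(_ ((n : SigmaN), (false : Sigma2))) /= nU.
suff : U ((n : SigmaN), (false : Sigma2)) by [].
apply: nU; split; right; apply/spec_le_SigmaN_Sigma2 => //=.
Qed.

Lemma reflective_in_Top0_prod (P : topologicalType -> Prop) :
  reflective_in_Top0 P -> homeomorphism_invariant P ->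
  forall X Y : topologicalType, kolmogorov_space X -> kolmogorov_space Y ->
  P X -> P Y -> P (X * Y)%type.
Proof.
move=> reflP homeoP X Y kX kY PX PY.
have [Z [eta [kZ PZ ceta univ]]] := reflP _ (kolmogorov_prod kX kY).
have cfst : continuous (@fst X Y) by move=> p; exact: cvg_fst.
have csnd : continuous (@snd X Y) by move=> p; exact: cvg_snd.
have [g1 [[cg1 g1eta] _]] := univ X fst kX PX cfst.
have [g2 [[cg2 g2eta] _]] := univ Y snd kY PY csnd.
pose h z := (g1 z, g2 z).
have ch : continuous h by move=> z; apply: cvg_pair; [exact: cg1|exact: cg2].
have etaK : cancel eta h.
  move=> p; rewrite /h -[g1 _]/((g1 \o eta) p) -[g2 _]/((g2 \o eta) p).
  by rewrite g1eta g2eta; case: p.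
have hK : cancel h eta.
  have [g [_ g_uniq]] := univ Z eta kZ PZ ceta.
  have g_id : g = id by apply: g_uniq; split=> // z; exact: cvg_id.
  have g_etah : g = eta \o h.
    apply: g_uniq; split; last by apply: funext => p /=; rewrite etaK.
    by move=> z; apply: continuous_comp; [exact: ch|exact: ceta].
  by move=> z; rewrite -[z in RHS]/(id z) -g_id g_etah.
exact: homeoP ceta ch etaK hK PZ.
Qed.

Theorem mainTheorem17 :
  [/\ S_star_well_filtered SigmaN,
      S_star_well_filtered Sigma2,
      ~ S_star_well_filtered (SigmaN * Sigma2)%type &
      ~ reflective_in_Top0 S_star_well_filtered].
Proof.
split.
- exact: S_star_well_filtered_SigmaN.
- exact: S_star_well_filtered_Sigma2.
- exact: not_S_star_well_filtered_SigmaN_Sigma2.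
move=> /reflective_in_Top0_prod /(_ homeomorphism_invariant_S_star_well_filtered).
move=> /(_ SigmaN Sigma2 scott_kolmogorov scott_kolmogorov).
move=> /(_ S_star_well_filtered_SigmaN S_star_well_filtered_Sigma2).
exact: not_S_star_well_filtered_SigmaN_Sigma2.
Qed.
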